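(* For any $t\in \mathbb{T}_n$ let $\hat{t}$ be its $(n\times n)$-matrix format, and let $J_n$ denote the $(n\times n)$ exchange matrix (the matrix whose entries are $1$ on the antidiagonal and $0$ everywhere else). Then $\hat{t}\, J_n$ is an uncurling metric of $\mathbb{T}_n$. Conversely, each member of the anti-rotor associated with $\mathbb{T}_n$ can be expressed as $\hat{t}\, J_n$ for some $t\in \mathbb{T}_n$.
   Context: An algebra means a real unital associative algebra with vector space of elements $\mathbb{R}^n$ (standard topology, standard basis, elements as column vectors). $\mathbb{T}_n$ is the $n$-dimensional algebra (under the usual matrix product) of real upper triangular Toeplitz $(n\times n)$-matrices; $s=(x_1,\dots,x_n)\in\mathbb{T}_n$ denotes the upper triangular Toeplitz matrix whose successive diagonals, starting with the main diagonal and moving right, have the constant values $x_1,\dots,x_n$. For an $n$-dimensional algebra $A$ with elements $s=(x_1,\dots,x_n)$ in an open ball of units centered at the identity $\mathbf{1}_A$, an uncurling metric is a real symmetric $(n\times n)$-matrix $L$ with $d\big((s^{-1})^T L\, \mathbf{d}s\big)=0$ on that ball, where $\mathbf{d}s=(dx_1,\dots,dx_n)^T$ and $d$ is the exterior derivative; the anti-rotor of $A$ is the real vector space of all uncurling metrics. *)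

From HB Require Import structures.
From mathcomp Require Import all_boot all_order all_algebra.
From mathcomp Require Import all_classical all_reals all_analysis.
Set Implicit Arguments. Unset Strict Implicit. Unset Printing Implicit Defensive.
Import Order.TTheory GRing.Theory Num.Theory.
Local Open Scope ring_scope.

Section TToep.
Variables (R : realType) (n : nat).

(* The element s = (x_1,...,x_n) of T_n is the column vector s : 'cV_n,
   with x_{k+1} = s k 0 (0-based indices). *)

(* matrix format \hat s : upper triangular Toeplitz matrix whose k-th
   superdiagonal (k = j - i) is constantly s k 0 *)
Definition toep (s : 'cV[R]_n) : 'M[R]_n :=
  \matrix_(i, j) (if (i <= j)%N then \sum_(k : 'I_n | val k == (j - i)%N) s k 0 else 0).

Definition exch : 'M[R]_n :=
  \matrix_(i, j) (if (val i + val j == n.-1)%N then 1 else 0).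

Definition oneT : 'cV[R]_n := \col_i (if val i == 0%N then 1 else 0).

(* s is a unit of the algebra T_n (product of T_n = matrix product of formats) *)
Definition unitT (s : 'cV[R]_n) : Prop :=
  exists u : 'cV[R]_n, toep s *m toep u = 1%:M /\ toep u *m toep s = 1%:M.

(* s^{-1}: the element whose matrix format is the inverse of \hat s, i.e. the
   first row of invmx (toep s) (read as a column vector) *)
Definition tinv (s : 'cV[R]_n) : 'cV[R]_n := (oneT^T *m invmx (toep s))^T.

Definition ebasis (k : 'I_n) : 'cV[R]_n := delta_mx k 0.

Definition eball (c : 'cV[R]_n) (r : R) : set 'cV[R]_n :=
  [set x | \sum_i (x i 0 - c i 0) ^+ 2 < r ^+ 2].

(* coefficient of dx_j in the 1-form (s^{-1})^T L ds *)
Definition form_coef (L : 'M[R]_n) (j : 'I_n) (s : 'cV[R]_n) : R :=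
  \sum_i tinv s i 0 * L i j.

Definition pderiv (f : 'cV[R]_n -> R) (k : 'I_n) (s : 'cV[R]_n) : R :=
  derive1 (fun h : R => f (s + h *: ebasis k)) 0.

Definition has_pderiv (f : 'cV[R]_n -> R) (k : 'I_n) (s : 'cV[R]_n) : Prop :=
  derivable (fun h : R => f (s + h *: ebasis k)) 0 1.

(* L is an uncurling metric on the ball B(1, r): L real symmetric and
   d((s^{-1})^T L ds) = 0 on the ball, i.e. for all j k, the coefficient
   functions have partial derivatives and d_k f_j = d_j f_k. *)
Definition uncurling_on (r : R) (L : 'M[R]_n) : Prop :=
  L^T = L /\
  forall s, eball oneT r s -> forall j k : 'I_n,
    has_pderiv (form_coef L j) k s /\
    pderiv (form_coef L j) k s = pderiv (form_coef L k) j s.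

End TToep.
Arguments oneT {R n}.
Arguments exch {R n}.

(* Write U = \hat s^-1 and S for the nilpotent shift matrix, so that
   \hat s = sum_p x_(p+1) S^p.  The coefficient of dx_j in (s^-1)^T L ds is
   (U L)_(0,j); since U commutes with S, its derivative along e_k is
   -(U S^k U L)_(0,j) = -(U^2 L)_(k,j).  Hence L is uncurling iff L and every
   U^2 L are symmetric on the ball.
   If L = \hat t J, then U^2 \hat t is again upper triangular Toeplitz, and every
   such T is persymmetric, T^T = J T J, so U^2 \hat t J is symmetric.
   Conversely, differentiating U^2 L at h = 0 along s = 1 + h e_k gives
   -2 S^k L, so every S^k L is symmetric; as (S^k)^T = J S^k J, this says that
   L J commutes with S, i.e. L J is some \hat t. *)

From HB Require Import structures.
From mathcomp Require Import all_boot all_order all_algebra.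
From mathcomp Require Import all_classical all_reals all_analysis.
From mathcomp Require Import perm zify lra.
Set Implicit Arguments. Unset Strict Implicit. Unset Printing Implicit Defensive.
Import Order.TTheory GRing.Theory Num.Theory.
Import numFieldNormedType.Exports.
Local Open Scope ring_scope.

Section MatrixDerive.
Context {R : realFieldType} {V : normedModType R}.

Lemma is_derive_mxP m p (F : V -> 'M[R]_(m, p)) (x v : V) (D : 'M[R]_(m, p)) :
  is_derive x v F D <-> forall i j, is_derive x v (fun h => F h i j) (D i j).
Proof.
split=> [[dF <-] i j | dF].
  have dFij := (derivable_mxP F x v).1 dF i j.
  by apply: DeriveDef => //; rewrite derive_mx // mxE.
have dF' : derivable F x v by apply/derivable_mxP => i j; case: (dF i j).
apply: DeriveDef => //; rewrite derive_mx //.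
by apply/matrixP => i j; rewrite mxE derive_val.
Qed.

Lemma is_derive_mulmx m p q (F : V -> 'M[R]_(m, p)) (G : V -> 'M[R]_(p, q))
    (x v : V) (DF : 'M[R]_(m, p)) (DG : 'M[R]_(p, q)) :
  is_derive x v F DF -> is_derive x v G DG ->
  is_derive x v (fun h => F h *m G h) (DF *m G x + F x *m DG).
Proof.
move=> /is_derive_mxP dF /is_derive_mxP dG; apply/is_derive_mxP => i j.
have -> : (fun h => (F h *m G h) i j) = \sum_l (fun h => F h i l * G h l j).
  by apply/funext => h; rewrite fct_sumE mxE.
rewrite !mxE -big_split /=; apply: is_derive_sum => l.
apply: is_derive_eq (is_deriveM (dF i l) (dG l j)) _.
by rewrite addrC; congr (_ + _); exact: mulrC.
Qed.

Lemma derivable_det m (F : V -> 'M[R]_m) (x v : V) :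
  derivable F x v -> derivable (fun h => \det (F h)) x v.
Proof.
move=> /derivable_mxP dF.
have -> : (fun h => \det (F h)) =
    \sum_(s : 'S_m) (fun h => ((-1) ^+ s * \prod_i F h i (s i))).
  by apply/funext => h; rewrite fct_sumE.
elim/big_ind: _ => [||s _]; first exact: derivable_cst.
  by move=> f g df dg; have := derivableD df dg.
have dP : derivable (fun h => \prod_i F h i (s i)) x v.
  rewrite -fct_prodE; elim/big_ind: _ => [||i _]; first exact: derivable_cst.
    by move=> f g df dg; have := derivableM df dg.
  exact: dF.
exact: derivableM (derivable_cst _ _ _) dP.
Qed.

Lemma derivable_adj m (F : V -> 'M[R]_m) (x v : V) :
  derivable F x v -> derivable (fun h => \adj (F h)) x v.
Proof.
move=> dF; apply/derivable_mxP => i j.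
have -> : (fun h => \adj (F h) i j) =
    (fun h => (-1) ^+ (j + i) * \det (row' j (col' i (F h)))).
  by apply/funext => h; rewrite mxE.
apply: (derivableM (derivable_cst _ _ _)).
apply: derivable_det; apply/derivable_mxP => a b.
have -> : (fun h => row' j (col' i (F h)) a b) =
    (fun h => F h (lift j a) (lift i b)).
  by apply/funext => h; rewrite !mxE.
exact: (derivable_mxP F x v).1.
Qed.

Lemma is_derive_trmx m p (F : V -> 'M[R]_(m, p)) (x v : V) (D : 'M[R]_(m, p)) :
  is_derive x v F D -> is_derive x v (fun h => (F h)^T) D^T.
Proof.
move=> /is_derive_mxP dF; apply/is_derive_mxP => i j.
by rewrite mxE; under eq_fun do rewrite mxE; exact: dF.
Qed.

Lemma is_derive_unique (W : normedModType R) (f : V -> W) (x v : V) (df1 df2 : W) :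
  is_derive x v f df1 -> is_derive x v f df2 -> df1 = df2.
Proof. by move=> [_ <-] [_ <-]. Qed.

End MatrixDerive.

Section RealVariable.
Context {R : realFieldType}.

Lemma is_derive_affine m p (A E : 'M[R]_(m, p)) (x : R) :
  is_derive x 1 (fun h => A + h *: E) E.
Proof.
apply/is_derive_mxP => i j; under eq_fun do rewrite !mxE.
apply: is_derive_eq (is_deriveD (is_derive_cst (A i j) x 1)
  (is_deriveM (is_derive_id x 1) (is_derive_cst (E i j) x 1))) _.
by rewrite scaler0 !add0r; exact: mulr1.
Qed.

Lemma is_derive_invmx m (F : R -> 'M[R]_m) (x : R) (D : 'M[R]_m) :
  F x \in unitmx -> is_derive x 1 F D ->
  is_derive x 1 (fun h => invmx (F h)) (- (invmx (F x) *m D *m invmx (F x))).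
Proof.
move=> uFx dF; have dFx : derivable F x 1 by case: dF.
have det_cont : {for x, continuous (fun h => \det (F h))}.
  exact/differentiable_continuous/derivable1_diffP/derivable_det.
have det_near : \forall h \near x, \det (F h) != 0.
  by apply: (cvgr_neq0 _ det_cont); rewrite -unitfE -unitmxE.
(* Near x, invmx F is the adjugate formula, hence derivable; differentiating
   F *m invmx F = 1 then identifies the derivative. *)
pose P h := (\det (F h))^-1 *: \adj (F h).
have invmxE : \forall h \near x, P h = invmx (F h).
  by apply: filterS det_near => h dh; rewrite /invmx unitmxE unitfE dh.
have dP : derivable P x 1.
  apply/derivable_mxP => i j.
  have -> : (fun h => P h i j) = (fun h => (\det (F h))^-1 * \adj (F h) i j).
    by apply/funext => h; rewrite mxE.
  apply: derivableM; last exact: (derivable_mxP _ _ _).1 (derivable_adj dFx) i j.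
  by apply: derivableV (derivable_det dFx); rewrite -unitfE -unitmxE.
have FP_near : \forall h \near x, 1%:M = F h *m P h.
  apply: filterS2 det_near invmxE => h dh ->.
  by rewrite mulmxV // unitmxE unitfE.
have FP_cst := near_eq_is_derive FP_near (is_derive_cst 1%:M x 1).
have Px : P x = invmx (F x) by rewrite /P /invmx uFx.
have := is_derive_unique (is_derive_mulmx dF (derivableP dP)) FP_cst.
rewrite Px => /eqP; rewrite addr_eq0 => /eqP DP.
apply: near_eq_is_derive invmxE _; apply: is_derive_eq (derivableP dP) _.
by rewrite -mulmxA DP mulmxN mulmxA mulVmx // mul1mx opprK.
Qed.

End RealVariable.

Definition shiftmx (R : pzSemiRingType) n : 'M[R]_n :=
  \matrix_(i, j) (j == i.+1 :> nat)%:R.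

Section ShiftMatrix.
Variables (R : pzRingType) (n : nat).
Local Notation N := n.+1.
Local Notation S := (shiftmx R N).

Lemma sum_nat_delta (F : 'I_N -> R) (a : nat) :
  \sum_(l < N) (l == a :> nat)%:R * F l = if (a < N)%N then F (inord a) else 0.
Proof.
case: ltnP => [a_lt|a_ge].
  rewrite (bigD1 (inord a)) //= inordK // eqxx mul1r big1 ?addr0 // => l.
  by rewrite -val_eqE /= inordK // => /negbTE ->; rewrite mul0r.
by rewrite big1 // => l _; rewrite ltn_eqF ?mul0r // (leq_trans (ltn_ord l) a_ge).
Qed.

Lemma shiftmxXE p (i j : 'I_N) : (S ^+ p) i j = (j == (i + p)%N :> nat)%:R.
Proof.
elim: p j => [|p IHp] j; first by rewrite expr0 mxE addn0 eq_sym.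
rewrite exprSr -mulmxE mxE.
under eq_bigr do rewrite IHp mxE.
rewrite (sum_nat_delta (fun l => (j == l.+1 :> nat)%:R)) addnS.
case: ltnP => [lt|ge]; first by rewrite inordK.
by rewrite ltn_eqF // ltnS (leq_trans (ltnW (ltn_ord j)) ge).
Qed.

Lemma shiftmxX_mulmx_row0 (k : 'I_N) (M : 'M[R]_N) j : (S ^+ k *m M) ord0 j = M k j.
Proof.
rewrite mxE; under eq_bigr do rewrite shiftmxXE.
by rewrite sum_nat_delta ltn_ord inord_val.
Qed.

Lemma mulmx_shiftmxXE (M : 'M[R]_N) p (i j : 'I_N) :
  (M *m S ^+ p) i j = if (p <= j)%N then M i (inord (j - p)%N) else 0.
Proof.
rewrite mxE; under eq_bigr => l _ do rewrite shiftmxXE commr_nat.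
case: leqP => [le|lt].
  have E l : (j == (l + p)%N :> nat) = (l == (j - p)%N :> nat) by apply/eqP/eqP; lia.
  under eq_bigr => l _ do rewrite E.
  have jp : (j - p < N)%N by move: (ltn_ord j); lia.
  by rewrite sum_nat_delta jp.
by rewrite big1 // => l _; rewrite ltn_eqF ?mul0r //; lia.
Qed.

End ShiftMatrix.

Lemma invmx_comm (R : comUnitRingType) m (A B : 'M[R]_m) :
  A \in unitmx -> A *m B = B *m A -> invmx A *m B = B *m invmx A.
Proof.
move=> uA AB; rewrite -[LHS]mulmx1 -(mulmxV uA) !mulmxA -(mulmxA _ B A) -AB.
by rewrite mulmxA mulVmx // mul1mx.
Qed.

Section Toeplitz.
Variables (R : realType) (n : nat).
Local Notation N := n.+1.
Local Notation S := (shiftmx R N).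
Local Notation X := (@exch R N).

Lemma toep_entry (v : 'cV[R]_N) (i j : 'I_N) :
  toep v i j = if (i <= j)%N then v (inord (j - i)) 0 else 0.
Proof.
rewrite mxE; case: leqP => // le_ij.
rewrite (big_pred1 (inord (j - i))) // => k /=.
by rewrite -val_eqE /= inordK //; move: (ltn_ord j); lia.
Qed.

Fact toep_is_linear : linear (@toep R N).
Proof.
move=> a u w; apply/matrixP => i j.
rewrite toep_entry [RHS]mxE [in RHS]mxE !toep_entry.
by case: leqP => _; rewrite ?mxE ?mulr0 ?addr0.
Qed.

HB.instance Definition _ :=
  GRing.isLinear.Build R 'cV[R]_N 'M[R]_N _ (@toep R N) toep_is_linear.

Lemma toep_ebasis (k : 'I_N) : toep (ebasis R k) = S ^+ k.
Proof.
apply/matrixP => i j; rewrite toep_entry shiftmxXE !mxE eqxx andbT.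
case: leqP => le_ij; last by rewrite ltn_eqF // ltn_addr.
rewrite -(inj_eq val_inj) /= inordK; last by move: (ltn_ord j); lia.
by congr (_ %:R); apply/eqP/eqP; lia.
Qed.

Lemma oneT_ebasis : oneT = ebasis R (ord0 : 'I_N).
Proof.
apply/matrixP => i j; rewrite !mxE (ord1 j) eqxx andbT -(inj_eq val_inj) /=.
by case: (_ == _).
Qed.

Lemma toep_oneT : toep (oneT : 'cV[R]_N) = 1%:M.
Proof. by rewrite oneT_ebasis (toep_ebasis ord0) expr0. Qed.

Lemma toepE (v : 'cV[R]_N) : toep v = \sum_(p < N) v p 0 *: S ^+ p.
Proof.
rewrite {1}[v]matrix_sum_delta linear_sum; apply: eq_bigr => p _.
by rewrite big_ord1 linearZ /= toep_ebasis.
Qed.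

Lemma toep_comm_shiftmxX (v : 'cV[R]_N) k : toep v *m S ^+ k = S ^+ k *m toep v.
Proof.
rewrite toepE mulmx_suml mulmx_sumr; apply: eq_bigr => p _.
by rewrite -scalemxAl -scalemxAr !mulmxE -!exprD addnC.
Qed.

Lemma comm_shiftmxX_toepE (A : 'M[R]_N) :
  (forall k : 'I_N, A *m S ^+ k = S ^+ k *m A) -> A = toep (row ord0 A)^T.
Proof.
move=> AS; apply/matrixP => k j.
rewrite toep_entry -shiftmxX_mulmx_row0 -AS mulmx_shiftmxXE.
by case: leqP => // _; rewrite !mxE.
Qed.

Lemma exchE (i j : 'I_N) : X i j = (j == (n - i)%N :> nat)%:R.
Proof.
rewrite mxE /=; move: (ltn_ord i) (ltn_ord j) => lt_i lt_j.
by do 2 case: eqP => //=; lia.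
Qed.

Lemma exch_mulmxE m (M : 'M[R]_(N, m)) i j : (X *m M) i j = M (rev_ord i) j.
Proof.
rewrite mxE; under eq_bigr => l _ do rewrite exchE.
rewrite sum_nat_delta ltnS leq_subr; congr (M _ _).
by apply/val_inj; rewrite /= inordK // ltnS leq_subr.
Qed.

Lemma trmx_exch : X^T = X.
Proof. by apply/matrixP => i j; rewrite !mxE addnC. Qed.

Lemma mulmx_exchE m (M : 'M[R]_(m, N)) i j : (M *m X) i j = M i (rev_ord j).
Proof. by rewrite -[M *m X]trmxK mxE trmx_mul trmx_exch exch_mulmxE mxE. Qed.

Lemma mulmx_exch_exch : X *m X = 1%:M.
Proof.
apply/matrixP => i j; rewrite exch_mulmxE exchE !mxE /= subSS subKn 1?eq_sym //.
by rewrite -ltnS.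
Qed.

Lemma trmx_toep (v : 'cV[R]_N) : (toep v)^T = X *m toep v *m X.
Proof.
apply/matrixP => i j; rewrite mulmx_exchE exch_mulmxE mxE !toep_entry /=.
move: (ltn_ord i) (ltn_ord j) => lt_i lt_j.
have -> : (n - i <= n - j)%N = (j <= i)%N by apply/idP/idP; lia.
by case: leqP => // _; congr (v _ _); apply/val_inj; rewrite /= !inordK; lia.
Qed.

Lemma trmx_toep_exch (v : 'cV[R]_N) : (toep v *m X)^T = toep v *m X.
Proof. by rewrite trmx_mul trmx_exch trmx_toep !mulmxA mulmx_exch_exch mul1mx. Qed.

Lemma shiftmxX_sym_toep_exch (L : 'M[R]_N) :
  (forall k : 'I_N, (S ^+ k *m L)^T = S ^+ k *m L) ->
  L = toep (row ord0 (L *m X))^T *m X.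
Proof.
move=> SL_sym; have L_sym : L^T = L by have := SL_sym ord0; rewrite expr0 mul1mx.
rewrite -comm_shiftmxX_toepE; first by rewrite -mulmxA mulmx_exch_exch mulmx1.
move=> k.
have := SL_sym k; rewrite trmx_mul L_sym -(toep_ebasis k) trmx_toep toep_ebasis => E.
by rewrite [RHS]mulmxA -E !mulmxA -(mulmxA _ X X) mulmx_exch_exch mulmx1.
Qed.

End Toeplitz.

Section Uncurling.
Variables (R : realType) (n : nat).
Local Notation N := n.+1.
Local Notation S := (shiftmx R N).
Local Notation X := (@exch R N).

Lemma form_coefE (L : 'M[R]_N) j (s : 'cV[R]_N) :
  form_coef L j s = (invmx (toep s) *m L) ord0 j.
Proof.
rewrite /form_coef /tinv oneT_ebasis /ebasis trmx_delta -rowE mxE.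
by apply: eq_bigr => i _; rewrite !mxE.
Qed.

Lemma is_derive_invmx_toep (s : 'cV[R]_N) (k : 'I_N) : toep s \in unitmx ->
  is_derive (0 : R) 1 (fun h => invmx (toep (s + h *: ebasis R k)))
    (- (invmx (toep s) *m S ^+ k *m invmx (toep s))).
Proof.
move=> us; under eq_fun do rewrite linearD linearZ /= toep_ebasis.
have := is_derive_invmx _ (is_derive_affine (toep s) (S ^+ k) 0).
by rewrite scale0r addr0; apply.
Qed.

Lemma pderiv_form_coef (L : 'M[R]_N) (s : 'cV[R]_N) j k : toep s \in unitmx ->
  has_pderiv (form_coef L j) k s /\
  pderiv (form_coef L j) k s = - (invmx (toep s) *m invmx (toep s) *m L) k j.
Proof.
move=> us; set U := invmx (toep s).
have dF : is_derive (0 : R) 1 (fun h => form_coef L j (s + h *: ebasis R k))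
    (- (U *m U *m L) k j).
  have := is_derive_mulmx (is_derive_invmx_toep k us) (is_derive_cst L (0 : R) 1).
  move=> /is_derive_mxP /(_ ord0 j) dF; under eq_fun do rewrite form_coefE.
  apply: is_derive_eq dF _; rewrite [Z in _ + Z]mulmx0 addr0 /cst mulNmx mxE.
  rewrite (invmx_comm us (toep_comm_shiftmxX s k)) -!mulmxA.
  by rewrite shiftmxX_mulmx_row0 !mulmxA.
by split; [case: dF | rewrite /pderiv derive1E derive_val].
Qed.

Lemma uncurling_onE (r : R) (L : 'M[R]_N) :
  (forall s : 'cV[R]_N, eball oneT r s -> toep s \in unitmx) ->
  uncurling_on r L <->
  L^T = L /\ forall s : 'cV[R]_N, eball oneT r s ->
    (invmx (toep s) *m invmx (toep s) *m L)^T = invmx (toep s) *m invmx (toep s) *m L.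
Proof.
move=> units; split=> -[L_sym dL]; split=> // s s_ball.
  apply/matrixP => k j; rewrite mxE; apply: oppr_inj.
  have [_ <-] := pderiv_form_coef L k j (units s s_ball).
  have [_ <-] := pderiv_form_coef L j k (units s s_ball).
  exact: (dL s s_ball k j).2.
move=> j k; have [dF ->] := pderiv_form_coef L j k (units s s_ball).
have [_ ->] := pderiv_form_coef L k j (units s s_ball).
by split=> //; rewrite -{1}(dL s s_ball) mxE.
Qed.

Lemma eball_oneT_ebasis (r h : R) (k : 'I_N) :
  `|h| < r -> eball oneT r (oneT + h *: ebasis R k).
Proof.
rewrite ltr_norml => /andP[h_gtNr h_ltr]; rewrite /eball /= (bigD1 k) //= big1.
  by rewrite !mxE eqxx /= addrAC subrr add0r mulr1 addr0; nra.
by move=> i ik; rewrite !mxE (negbTE ik) addrAC subrr add0r mulr0 expr2 mulr0.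
Qed.

Lemma uncurling_toep_exch (r : R) (t : 'cV[R]_N) :
  (forall s : 'cV[R]_N, eball oneT r s -> toep s \in unitmx) ->
  uncurling_on r (toep t *m X).
Proof.
move=> units; apply/uncurling_onE => //; split=> [|s /units us].
  exact: trmx_toep_exch.
set U := invmx (toep s).
have UX k : U *m S ^+ k = S ^+ k *m U := invmx_comm us (toep_comm_shiftmxX s k).
rewrite !mulmxA (comm_shiftmxX_toepE (A := U *m U *m toep t)) ?trmx_toep_exch // => k.
by rewrite -!mulmxA toep_comm_shiftmxX !mulmxA -(mulmxA U U) UX mulmxA UX.
Qed.

Lemma shiftmxX_mulmx_sym (r : R) (L : 'M[R]_N) : 0 < r ->
  (forall s : 'cV[R]_N, eball oneT r s ->
    (invmx (toep s) *m invmx (toep s) *m L)^T = invmx (toep s) *m invmx (toep s) *m L) ->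
  forall k : 'I_N, (S ^+ k *m L)^T = S ^+ k *m L.
Proof.
move=> r_gt0 UUL_sym k.
pose G h := invmx (toep (oneT + h *: ebasis R k)).
have G0 : G 0 = 1%:M by rewrite /G scale0r addr0 toep_oneT invmx1.
have dG : is_derive (0 : R) 1 G (- S ^+ k).
  have := is_derive_invmx_toep k (_ : toep oneT \in unitmx).
  by rewrite toep_oneT invmx1 mulmx1 mul1mx; apply; exact: unitmx1.
have dGGL := is_derive_mulmx (is_derive_mulmx dG dG) (is_derive_cst L (0 : R) 1).
have GGL_sym : \forall h \near (0 : R), (G h *m G h *m L)^T = G h *m G h *m L.
  by apply: filterS (nbhs0_lt r_gt0) => h /(eball_oneT_ebasis k); apply: UUL_sym.
have := is_derive_unique (near_eq_is_derive GGL_sym (is_derive_trmx dGGL)) dGGL.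
have -> : (- S ^+ k *m G 0 + G 0 *m - S ^+ k) *m L = (- 2%:R) *: (S ^+ k *m L).
  by rewrite G0 mulmx1 mul1mx mulmxDl mulNmx scaleNr scaler_nat mulr2n opprD.
rewrite [Z in _ + Z]mulmx0 addr0 linearZ /= => /scalerI; apply.
by rewrite oppr_eq0 pnatr_eq0.
Qed.

End Uncurling.

Theorem theorem10p4 (R : realType) (n : nat) (r : R) (hr : 0 < r)
  (hball : forall s : 'cV[R]_n, eball oneT r s -> unitT s) :
  (forall t : 'cV[R]_n, uncurling_on r (toep t *m exch)) /\
  (forall L : 'M[R]_n, uncurling_on r L ->
     exists t : 'cV[R]_n, L = toep t *m exch).
Proof.
case: n hball => [|n] hball.
  split=> [t|L _]; last by exists 0; rewrite [LHS]flatmx0 [RHS]flatmx0.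
  by split=> [|s _ [] //]; rewrite [LHS]flatmx0 [RHS]flatmx0.
have toep_unit (s : 'cV[R]_n.+1) : eball oneT r s -> toep s \in unitmx.
  by move=> /hball [u [/mulmx1_unit []]].
split=> [t|L /(uncurling_onE _ toep_unit) [_ UUL_sym]].
  exact: uncurling_toep_exch.
exists (row ord0 (L *m exch))^T; apply: shiftmxX_sym_toep_exch.
exact: shiftmxX_mulmx_sym hr UUL_sym.
Qed.
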